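(* Fix a countable collection of languages $\mathcal{L}$ and $\rho\in(0,1]$. Under enumerations with vanishing noise rate and arbitrary omissions, there exists a set-based generator that generates in the limit from $\mathcal{L}$ and achieves set-based lower density $\rho$ if and only if the following holds: for every non-empty finite subcollection $\mathcal{L}'\subseteq\mathcal{L}$ with $|\bigcap_{L\in\mathcal{L}'}L|=\infty$, every $L\in\mathcal{L}'$ satisfies $\mu_{\rm low}\big(\bigcap_{L''\in\mathcal{L}'}L'',\,L\big)\ge\rho$.
   Context: The universe is $U=\mathbb{N}$ with its natural order. A language is an infinite subset of $U$; a collection is a countable family of languages. For $A,B\subseteq\mathbb{N}$ with $B=\{b_1<b_2<\cdots\}$, $\mu_{\rm low}(A,B)=\liminf_n\frac1n|A\cap\{b_1,\dots,b_n\}|$. An enumeration is a sequence of distinct elements of $U$; $S_n=\{x_1,\dots,x_n\}$; the empirical noise rate is $R(L;x_{1:n})=\frac1n|\{t\le n:x_t\notin L\}|$. An enumeration of $K$ with vanishing ($o(1)$) noise rate and arbitrary omissions is a sequence in which every element of some infinite $\hat K\subseteq K$ appears exactly once and $R(\hat K;x_{1:n})\to0$. A set-based generator is a sequence of maps that, given $x_1,\dots,x_n$ (and knowledge of $\mathcal{L}$, not of $K$), outputs $A_n\subseteq U\setminus S_n$. It generates in the limit if for every $K\in\mathcal{L}$ and admissible enumeration of $K$ there is $n^\star$ with $A_n\subseteq K$ for all $n\ge n^\star$; it achieves set-based lower density $\rho$ if $\liminf_n\mu_{\rm low}(A_n,K)\ge\rho$ for every such $K$ and enumeration. *)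

From HB Require Import structures.
From mathcomp Require Import all_boot all_order all_algebra.
From mathcomp Require Import all_classical all_reals all_analysis.
Set Implicit Arguments. Unset Strict Implicit. Unset Printing Implicit Defensive.
Import Order.TTheory GRing.Theory Num.Theory numFieldNormedType.Exports.
Local Open Scope classical_set_scope.
Local Open Scope ring_scope.

(* Languages are subsets of U = nat ([set nat]); a collection is a countable
   family of infinite subsets of nat, represented as a [set (set nat)]. *)
Definition is_collection (C : set (set nat)) : Prop :=
  countable C /\ (forall L, C L -> infinite_set L).

(* b_{n+1}: the element of B having exactly n elements of B below it
   (0-indexed n-th element of B in increasing order). *)
Definition bnth (B : set nat) (n : nat) : nat :=
  xget 0%N [set b | B b /\ (\sum_(y < b) `[< B y >])%N = n].

Definition count_in (A B : set nat) (n : nat) : nat :=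
  (\sum_(i < n) `[< A (bnth B i) >])%N.

Definition mu_low (R : realType) (A B : set nat) : \bar R :=
  limn_einf (fun n => ((count_in A B n.+1)%:R / (n.+1)%:R : R)%:E).

(* Empirical noise rate R(L; x_{1:n+1}) of an enumeration x : nat -> nat
   (x 0 = x_1, ...). *)
Definition noise_rate (R : realType) (L : set nat) (x : nat -> nat) (n : nat) : R :=
  (\sum_(t < n.+1) `[< ~ L (x t) >])%:R / (n.+1)%:R.

Definition admissible (R : realType) (K : set nat) (x : nat -> nat) : Prop :=
  injective x /\
  exists Khat : set nat,
    Khat `<=` K /\ infinite_set Khat /\ Khat `<=` range x /\
    (noise_rate R Khat x n @[n --> \oo] --> 0%R).

Definition prefix (x : nat -> nat) (n : nat) : seq nat := mkseq x n.

Definition set_generator (G : seq nat -> set nat) : Prop :=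
  forall s y, y \in s -> ~ G s y.

(* A_n for n >= 1 (index shifted: gen_out G x n = A_{n+1}). *)
Definition gen_out (G : seq nat -> set nat) (x : nat -> nat) (n : nat) : set nat :=
  G (prefix x n.+1).

Definition generates_in_limit (G : seq nat -> set nat) (K : set nat)
  (x : nat -> nat) : Prop :=
  exists nstar, forall n, (nstar <= n)%N -> gen_out G x n `<=` K.

Definition achieves_density (R : realType) (rho : R) (G : seq nat -> set nat)
  (K : set nat) (x : nat -> nat) : Prop :=
  (rho%:E <= limn_einf (fun n => mu_low R (gen_out G x n) K))%E.

From Pilot Require Import Defs.
From HB Require Import structures.
From mathcomp Require Import all_boot all_order all_algebra.
From mathcomp Require Import all_classical all_reals all_analysis.
From mathcomp Require Import zify.
Set Implicit Arguments. Unset Strict Implicit. Unset Printing Implicit Defensive.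
Import Order.TTheory GRing.Theory Num.Theory numFieldNormedType.Exports.
Local Open Scope classical_set_scope.

(* Necessity: listing the infinite intersection I of a finite subfamily in
   increasing order is a noiseless enumeration of every member of the
   subfamily, so the outputs A_n eventually lie in I, and the density of A_n
   in L is at most that of I.

   Sufficiency: list the collection as L_0, L_1, ...  After n inputs call L_j
   consistent when j <= n and at most a 2^-(j+2) fraction of the inputs lies
   outside L_j; output the intersection of the consistent L_j with j <= m,
   minus the inputs, for the largest m <= n making this intersection
   infinite.  Once the target L_i is consistent, the consistent L_j with
   j <= i together miss fewer than half of the distinct inputs, so their
   intersection contains more than n/2 of them; as the finitely many finite
   intersections of L_0, ..., L_i are bounded, it is infinite for large n.
   Hence m >= i, the output lies in L_i, and the hypothesis applied to the
   consistent languages of index <= m gives the density, which removing the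
   finitely many inputs does not change. *)

Definition rank (B : set nat) (b : nat) : nat := \sum_(y < b) `[< B y >].

Lemma rankS B b : rank B b.+1 = rank B b + `[< B b >].
Proof. by rewrite /rank big_ord_recr. Qed.

Lemma le_rank B m n : m <= n -> rank B m <= rank B n.
Proof.
apply: (@homo_leq _ _ leq) => // [???|b]; first exact: leq_trans.
by rewrite rankS leq_addr.
Qed.

Lemma rank_lt B a b : B a -> a < b -> rank B a < rank B b.
Proof.
move=> Ba ab; apply: leq_trans (le_rank B ab).
by rewrite rankS asboolT // addn1.
Qed.

Lemma rank_inj B a b : B a -> B b -> rank B a = rank B b -> a = b.
Proof.
move=> Ba Bb e; case: (ltngtP a b) => // ab.
- by have := rank_lt Ba ab; rewrite e ltnn.
- by have := rank_lt Bb ab; rewrite e ltnn.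
Qed.

Lemma rank_unbounded B : infinite_set B -> forall n, exists b, n <= rank B b.
Proof.
move=> infB; elim=> [|n [b nb]]; first by exists 0.
have [c Bc bc] : exists2 c, B c & b <= c.
  apply: contrapT => nc; apply: infB; apply: (@sub_finite_set _ _ `I_b) => // c Bc /=.
  by rewrite ltnNge; apply/negP => bc; apply: nc; exists c.
exists c.+1; apply: leq_trans (rank_lt Bc (ltnSn c)).
by rewrite ltnS (leq_trans nb) ?le_rank.
Qed.

Lemma rank_surj B : infinite_set B -> forall n, exists2 b, B b & rank B b = n.
Proof.
move=> infB n; have [[|b] nb bmin] := ex_minnP (rank_unbounded infB n.+1).
  by rewrite /rank big_ord0 in nb.
rewrite rankS in nb.
have bn : rank B b <= n by rewrite leqNgt; apply/negP => /bmin; rewrite ltnn.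
case: (asboolP (B b)) nb => Bb nb; last by move: (leq_ltn_trans bn nb); rewrite addn0 ltnn.
by exists b => //; apply/eqP; rewrite eqn_leq bn -ltnS -(addn1 (rank B b)).
Qed.

Lemma bnth_spec B n : infinite_set B -> B (bnth B n) /\ rank B (bnth B n) = n.
Proof.
move=> /rank_surj/(_ n) [b Bb bn].
by apply: (@xgetPex _ 0 [set b | B b /\ rank B b = n]); exists b.
Qed.

Lemma bnth_inj B : infinite_set B -> injective (bnth B).
Proof.
move=> infB m n e.
by rewrite -(proj2 (bnth_spec m infB)) -(proj2 (bnth_spec n infB)) e.
Qed.

Lemma bnth_rank B b : infinite_set B -> B b -> bnth B (rank B b) = b.
Proof.
move=> infB Bb; have [Bn bn] := bnth_spec (rank B b) infB.
exact: rank_inj Bn Bb bn.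
Qed.

Lemma count_mkseq (T : Type) (a : pred T) (f : nat -> T) n :
  count a (mkseq f n) = \sum_(i < n) a (f i).
Proof.
rewrite /mkseq -sum1_count big_map big_mkcond /= -{1}(subn0 n) big_mkord.
by apply: eq_bigr => i _; case: (a (f i)).
Qed.

Lemma count_mem_le_size (s t : seq nat) : uniq t -> count (mem s) t <= size s.
Proof.
move=> ut; rewrite -size_filter (leq_trans _ (size_undup s)) //.
apply: uniq_leq_size; first exact: filter_uniq.
by move=> y; rewrite mem_filter mem_undup => /andP[].
Qed.

Lemma count_in_le (A I K : set nat) (s : seq nat) n : infinite_set K ->
  I `\` A `<=` [set` s] -> count_in I K n <= count_in A K n + size s.
Proof.
move=> infK IAs; rewrite /count_in.
apply: (@leq_trans (\sum_(i < n) (`[< A (bnth K i) >] + (bnth K i \in s)))).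
  apply: leq_sum => i _; case: (asboolP (I (bnth K i))) => // Ii.
  case: (asboolP (A (bnth K i))) => //= Ai.
  by rewrite add0n lt0b; apply: IAs.
rewrite big_split /= leq_add2l -(count_mkseq (mem s)).
by apply: count_mem_le_size; rewrite mkseq_uniq //; exact: bnth_inj.
Qed.

Definition misses (L : set nat) (s : seq nat) : nat := count (fun y => ~~ `[< L y >]) s.

Lemma dyadic_sum_lt (o : nat -> nat) N k :
  (forall j, o j * 2 ^ j.+2 <= N) -> 0 < N -> 2 * \sum_(j < k) o j < N.
Proof.
move=> oN N0.
have : 2 ^ k.+1 * \sum_(j < k) o j + N <= 2 ^ k * N.
  elim: k => [|k IH]; first by rewrite big_ord0 muln0 add0n expn0 mul1n.
  have := oN k; rewrite big_ord_recr /= mulnDr !expnS in IH *.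
  move: (2 ^ k) (o k) (\sum_(j < k) o j) IH => P ok S; nia.
have : 0 < 2 ^ k by rewrite expn_gt0.
rewrite expnS; move: (2 ^ k) (\sum_(j < k) o j) => P S; nia.
Qed.

Lemma finite_nat_bounded (A : set nat) : finite_set A -> exists b, A `<=` `I_b.
Proof.
move=> /finite_seqP [s ->]; exists (\max_(y <- s) y).+1 => y /= sy.
by rewrite ltnS (@leq_bigmax_seq _ _ xpredT id y).
Qed.

Lemma finite_family_bounded (T : finType) (F : T -> set nat) :
  exists b, forall t, finite_set (F t) -> F t `<=` `I_b.
Proof.
have /fin_all_exists [b Fb] : forall t, exists b, finite_set (F t) -> F t `<=` `I_b.
  move=> t; have [/finite_nat_bounded [b Fb]|infFt] := pselect (finite_set (F t)).
    by exists b.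
  by exists 0.
exists (\max_t b t) => t /Fb Ftb y /Ftb /= yb.
exact: leq_trans yb (leq_bigmax t).
Qed.

Lemma near_finite_forall (T : Type) (F : set_system T) (I : choiceType)
    (D : set I) (P : I -> T -> Prop) : Filter F -> finite_set D ->
  (forall i, D i -> \forall x \near F, P i x) -> \forall x \near F, forall i, D i -> P i x.
Proof.
move=> FF /finite_fsetP [X ->] DP.
by apply: filterS (filter_bigI (f := P) FF DP) => x XP i /XP.
Qed.

Section Liminf.
Variable R : realType.
Local Open Scope ereal_scope.
Implicit Types u v : (\bar R)^nat.

Lemma limn_einf_cst (c : \bar R) : limn_einf (fun=> c) = c.
Proof. by rewrite is_cvg_limn_einfE ?lim_cst //; exact: cvg_cst. Qed.

Lemma limn_einf_le_near u v : (\forall n \near \oo, u n <= v n) ->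
  limn_einf u <= limn_einf v.
Proof.
move=> [N _ uv]; rewrite !limn_einf_lim.
apply: lee_lim; [exact: is_cvg_einfs|exact: is_cvg_einfs|].
exists N => // n /= Nn; apply: le_ereal_inf_tmp => _ [k /= nk <-].
apply: le_trans (uv k (leq_trans Nn nk)).
by apply: ereal_inf_lbound; exists k.
Qed.

Lemma limn_einf_le_approx u v :
  (forall e : R, (0 < e)%R -> \forall n \near \oo, u n <= v n + e%:E) ->
  limn_einf u <= limn_einf v.
Proof.
move=> uv; apply/lee_addgt0Pr => e e0.
rewrite addeC -limn_einf_shift //; apply: limn_einf_le_near.
by apply: filterS (uv e e0) => n; rewrite addeC.
Qed.

End Liminf.

Section Density.
Variable R : realType.
Local Open Scope ring_scope.

Lemma le_mu_low_finite_diff (A I K : set nat) :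
  infinite_set K -> finite_set (I `\` A) -> (mu_low R I K <= mu_low R A K)%E.
Proof.
move=> infK /finite_seqP [s IAs]; apply: limn_einf_le_approx => e e0.
near=> n; rewrite -EFinD lee_fin.
have se : (size s)%:R / n.+1%:R <= e.
  rewrite ler_pdivrMr ?ltr0n // mulrC -ler_pdivrMr //.
  apply: ltW; apply: lt_le_trans (_ : n%:R <= n.+1%:R); last by rewrite ler_nat.
  by near: n; exact: nbhs_infty_gtr.
apply: le_trans (lerD (lexx _) se).
rewrite -mulrDl ler_pM2r ?invr_gt0 ?ltr0n // -natrD ler_nat.
by apply: count_in_le; rewrite // IAs.
Unshelve. all: by end_near.
Qed.

Lemma admissible_misses K x k : admissible R K x ->
  \forall n \near \oo, (misses K (Defs.prefix x n.+1) * 2 ^ k < n.+1)%N.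
Proof.
move=> [_ [Kh [KhK [_ [_ noise0]]]]].
have k0 : (0 : R) < (2 ^ k)%:R^-1 by rewrite invr_gt0 ltr0n expn_gt0.
apply: filterS (cvgr_dist_lt _ _ noise0 _ k0) => n.
rewrite /misses count_mkseq sub0r normrN /noise_rate ger0_norm ?divr_ge0 //.
rewrite ltr_pdivrMr ?ltr0n // mulrC ltr_pdivlMr ?ltr0n ?expn_gt0 //.
rewrite -natrM ltr_nat; apply: leq_ltn_trans.
rewrite leq_mul2r; apply/orP; right; apply: leq_sum => t _.
by case: (asboolP (K (x t))) => //= /(contra_not (@KhK _)) nKh; rewrite asboolT.
Qed.

Lemma bnth_admissible (I K : set nat) :
  infinite_set I -> I `<=` K -> admissible R K (bnth I).
Proof.
move=> infI IK; split; first exact: bnth_inj.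
exists I; do 3!split=> //; first by move=> y Iy; exists (rank I y); rewrite ?bnth_rank.
apply: cvg_near_cst; apply: nearW => n; rewrite /noise_rate big1 ?mul0r // => t _.
by rewrite asbool_neg asboolT //; exact: (proj1 (bnth_spec t infI)).
Qed.

End Density.

Definition generates_with_density (R : realType) (C : set (set nat)) (rho : R)
    (G : seq nat -> set nat) : Prop :=
  forall K x, C K -> admissible R K x ->
    generates_in_limit G K x /\ achieves_density rho G K x.

Definition dense_finite_intersections (R : realType) (C : set (set nat)) (rho : R) :
    Prop :=
  forall C' : set (set nat), C' `<=` C -> finite_set C' -> C' !=set0 ->
    infinite_set (\bigcap_(L in C') L) ->
    forall L, C' L -> (rho%:E <= mu_low R (\bigcap_(L'' in C') L'') L)%E.

Lemma dense_finite_intersections_of_generator (R : realType) C (rho : R) G :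
  generates_with_density C rho G -> dense_finite_intersections C rho.
Proof.
move=> densG C' C'C finC' _ infI L C'L; set I := \bigcap_(L in C') L.
have admI L' : C' L' -> admissible R L' (bnth I).
  by move=> C'L'; apply: bnth_admissible => //; exact: bigcap_inf.
have outI : \forall n \near \oo, gen_out G (bnth I) n `<=` I.
  apply: filterS (near_finite_forall
    (P := fun L' n => gen_out G (bnth I) n `<=` L') _ finC' _).
    by move=> n AL y Ay L' C'L'; exact: AL C'L' y Ay.
  move=> L' C'L'; have [[N AN] _] := densG L' _ (C'C _ C'L') (admI _ C'L').
  by exists N => // n /AN.
have [_] := densG L _ (C'C _ C'L) (admI _ C'L); move/le_trans; apply.
rewrite -[X in (_ <= X)%E]limn_einf_cst; apply: limn_einf_le_near.
apply: filterS outI => n AI; apply: le_mu_low_finite_diff.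
- by apply: contra_not infI; apply: sub_finite_set; exact: bigcap_inf.
- by apply: (@sub_finite_set _ _ set0) => // y [/AI].
Qed.

Section Generator.
Variable L : nat -> set nat.

(* The tolerances 2^-(j+2) sum to less than 1/2 (see [misses_core_lt]). *)
Definition consistent (s : seq nat) (j : nat) : bool :=
  (j <= size s) && (misses (L j) s * 2 ^ j.+2 <= size s).

Definition core (s : seq nat) (m : nat) : set nat :=
  \bigcap_(j in [set j | consistent s j /\ j <= m]) L j.

Definition depth (s : seq nat) : nat :=
  \max_(m < (size s).+1 | `[< infinite_set (core s m) >]) m.

Definition generator (s : seq nat) : set nat := core s (depth s) `\` [set` s].

Lemma generator_notin s y : y \in s -> ~ generator s y.
Proof. by move=> sy []. Qed.

Lemma core_sub s m i : consistent s i -> i <= m -> core s m `<=` L i.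
Proof. by move=> si im; apply: bigcap_inf. Qed.

Lemma core_bigcap s m :
  core s m = \bigcap_(K in L @` [set j | consistent s j /\ j <= m]) K.
Proof. by rewrite bigcap_image. Qed.

Lemma misses_core s m t :
  misses (core s m) t <= \sum_(j < m.+1 | consistent s j) misses (L j) t.
Proof.
elim: t => [|y t IH]; first by rewrite big1.
rewrite /misses /= big_split /= leq_add //.
case: (asboolP (core s m y)) => //= /existsNP [j /not_implyP [[sj jm] nLy]].
by rewrite (bigD1 (Ordinal (jm : j < m.+1))) //= asboolF.
Qed.

Lemma misses_core_lt s m : 0 < size s -> 2 * misses (core s m) s < size s.
Proof.
move=> s0; apply: leq_ltn_trans (leq_mul (leqnn 2) (misses_core s m s)) _.
rewrite big_mkcond /=.
apply: (dyadic_sum_lt (o := fun j => if consistent s j then misses (L j) s else 0)) => // j.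
by case: ifP => [/andP[]|]; rewrite ?mul0n.
Qed.

Lemma core_infinite s m b : uniq s -> 0 < size s -> 2 * b <= size s ->
  (finite_set (core s m) -> core s m `<=` `I_b) -> infinite_set (core s m).
Proof.
move=> us s0 sb coreb /coreb core_lt_b.
have hits : count (fun y => `[< core s m y >]) s <= b.
  rewrite -[leqRHS](size_iota 0 b) (leq_trans _ (count_mem_le_size _ us)) //.
  by apply: sub_count => y /asboolP /core_lt_b; rewrite /= mem_iota.
have := count_predC (fun y => `[< core s m y >]) s.
rewrite (@eq_count _ (predC _) (fun y => ~~ `[< core s m y >])) // -/(misses _ s).
have := misses_core_lt m s0; move: hits sb; clear.
move: (count _ s) (misses _ s) (size s) => hits missed n; lia.
Qed.

Lemma core_bounded i : exists b, forall s,
  finite_set (core s i) -> core s i `<=` `I_b.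
Proof.
pose F (S : {set 'I_i.+1}) := [set y | forall j : 'I_i.+1, j \in S -> L j y].
have [b Fb] := finite_family_bounded F; exists b => s.
suff -> : core s i = F [set j : 'I_i.+1 | consistent s j]%SET by exact: Fb.
apply/seteqP; split => y /= coreY.
- by move=> j; rewrite inE => sj; exact: core_sub sj (ltn_ord j) _ coreY.
- by rewrite /core => j [sj ji]; apply: (coreY (Ordinal (ji : j < i.+1))); rewrite inE.
Qed.

Lemma depth_spec s i : i <= size s -> infinite_set (core s i) ->
  i <= depth s /\ infinite_set (core s (depth s)).
Proof.
move=> isz infi; set i' : 'I_(size s).+1 := Ordinal (isz : i < (size s).+1).
have i'P : `[< infinite_set (core s i') >] by exact/asboolP.
split; first exact: (@leq_bigmax_cond _ (fun m : 'I_(size s).+1 => _) val _ i'P).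
rewrite /depth (bigop.bigmax_eq_arg _ i'P).
by case: arg_maxnP => // m /asboolP.
Qed.

Lemma consistent_depth i : exists N, forall s, uniq s -> N <= size s ->
  consistent s i -> i <= depth s /\ infinite_set (core s (depth s)).
Proof.
have [b coreb] := core_bounded i; exists (2 * b).+1 => s us sN si.
apply: depth_spec; first by case/andP: si.
by apply: core_infinite us _ _ (coreb s); [exact: leq_trans sN | exact: ltnW].
Qed.

Lemma consistent_eventually (R : realType) i x : admissible R (L i) x ->
  \forall n \near \oo, consistent (Defs.prefix x n.+1) i.
Proof.
move=> adm; apply: filterS2 (admissible_misses i.+2 adm) (nbhs_infty_ge i) => n.
by rewrite /consistent size_mkseq => /ltnW -> /leqW ->.
Qed.

Lemma generator_dense (R : realType) (rho : R) s i :
  dense_finite_intersections (range L) rho -> (forall j, infinite_set (L j)) ->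
  consistent s i -> i <= depth s -> infinite_set (core s (depth s)) ->
  generator s `<=` L i /\ (rho%:E <= mu_low R (generator s) (L i))%E.
Proof.
move=> denseL infL si; set m := depth s => im infm.
have coreLi := core_sub si im; split; first by move=> y [/coreLi].
have fin : finite_set (core s m `\` generator s).
  apply: (sub_finite_set _ (finite_seq s)) => y [coreY notgen].
  by apply: contrapT => ns; exact: notgen.
apply: le_trans (le_mu_low_finite_diff R (infL i) fin).
rewrite core_bigcap; apply: denseL.
- by move=> _ [j _ <-]; exists j.
- apply: finite_image; apply: (@sub_finite_set _ _ `I_m.+1) => // j [_ jm].
  by rewrite /= ltnS.
- by exists (L i), i.
- by rewrite -core_bigcap.
- by exists i.
Qed.

End Generator.

Lemma generator_of_dense_finite_intersections (R : realType) C (rho : R) :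
  is_collection C -> dense_finite_intersections C rho ->
  exists G, set_generator G /\ generates_with_density C rho G.
Proof.
move=> [cntC infC] denseC.
case/pfcard_geP: cntC => [->|/surjfunPex [L CL]].
  by exists (fun=> set0); split=> [s y _ []|K x []].
subst C; have infL j : infinite_set (L j) by apply: infC; exists j.
exists (generator L); split=> [|_ x [i _ <-] adm]; first exact: generator_notin.
have [N depthN] := consistent_depth L i.
have good : \forall n \near \oo, gen_out (generator L) x n `<=` L i /\
    (rho%:E <= mu_low R (gen_out (generator L) x n) (L i))%E.
  apply: filterS2 (consistent_eventually adm) (nbhs_infty_ge N) => n si Nn.
  have [|im infm] := depthN _ (@mkseq_uniq _ x n.+1 adm.1) _ si.
    by rewrite size_mkseq leqW.
  exact: generator_dense.
split; first by have [M _ AM] := good; exists M => n /AM [].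
rewrite /achieves_density -[rho%:E]limn_einf_cst; apply: limn_einf_le_near.
by apply: filterS good => n [].
Qed.

Local Open Scope ring_scope.

Theorem theorem6p11 (R : realType) (C : set (set nat)) (rho : R) :
  is_collection C -> 0 < rho <= 1 ->
  ((exists G : seq nat -> set nat,
      set_generator G /\
      forall K x, C K -> admissible R K x ->
        generates_in_limit G K x /\ achieves_density rho G K x)
   <->
   (forall C' : set (set nat),
      C' `<=` C -> finite_set C' -> C' !=set0 ->
      infinite_set (\bigcap_(L in C') L) ->
      forall L, C' L -> (rho%:E <= mu_low R (\bigcap_(L'' in C') L'') L)%E)).
Proof.
(* Both directions hold for every real [rho]. *)
move=> collC _; split=> [[G [_ densG]]|]; last exact: generator_of_dense_finite_intersections.
exact: dense_finite_intersections_of_generator densG.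
Qed.
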